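(* Let $X$ be a compact metric space and suppose $f:X\to X$ is a continuous map that is sensitive, minimal, and has the shadowing property. Then there are a sequence $\alpha$ of prime numbers and a continuous map $\pi:X\to\Delta_\alpha$ such that $g_\alpha\circ\pi=\pi\circ f$ and $\pi$ is one-to-one on a dense subset of $X$.
   Context: $f$ is minimal if $\overline{\{f^n(x):n\ge0\}}=X$ for all $x\in X$. $f$ is sensitive if there is $\delta>0$ such that for every nonempty open $U\subseteq X$ there is $n>0$ with $\mathrm{diam}(f^n(U))>\delta$. A sequence $(x_n)_{n\ge0}$ is a $\delta$-pseudo-orbit if $d(f(x_n),x_{n+1})\le\delta$ for all $n$; $f$ has the shadowing property if for every $\epsilon>0$ there is $\delta>0$ such that for every $\delta$-pseudo-orbit $(x_n)$ there is $y\in X$ with $d(f^n(y),x_n)<\epsilon$ for all $n\ge0$. For $\alpha=(j_1,j_2,\dots)$ with integers $j_i\ge2$, $\Delta_\alpha$ is the set of sequences $(r_1,r_2,\dots)$ with $r_i\in\{0,\dots,j_i-1\}$, with metric $d_\alpha(r,s)=\sum_i\delta(r_i,s_i)/2^i$ ($\delta(a,b)=1$ if $a\ne b$, else $0$), and $g_\alpha:\Delta_\alpha\to\Delta_\alpha$ is the adding machine map $r\mapsto r+(1,0,0,\dots)$, addition being coordinatewise with carry (first coordinate mod $j_1$, carry into the second coordinate taken mod $j_2$, etc.). *)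

From Stdlib Require Import Reals Znumtheory ZArith Arith List ClassicalEpsilon.
Open Scope R_scope.

Section MetricDefs.
Variable X : Type.
Variable d : X -> X -> R.

Definition is_metric : Prop :=
  (forall x y, 0 <= d x y) /\
  (forall x y, d x y = 0 <-> x = y) /\
  (forall x y, d x y = d y x) /\
  (forall x y z, d x z <= d x y + d y z).

Definition open_set (U : X -> Prop) : Prop :=
  forall x, U x -> exists r, 0 < r /\ forall y, d x y < r -> U y.

Definition compact_space : Prop :=
  forall (I : Type) (U : I -> X -> Prop),
    (forall i, open_set (U i)) ->
    (forall x, exists i, U i x) ->
    exists l : list I, forall x, exists i, In i l /\ U i x.

Definition closure (A : X -> Prop) (y : X) : Prop :=
  forall eps, 0 < eps -> exists a, A a /\ d a y < eps.

Definition dense (A : X -> Prop) : Prop := forall y, closure A y.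

Definition is_diam (A : X -> Prop) (D : R) : Prop :=
  is_lub (fun r => exists x y, A x /\ A y /\ r = d x y) D.

End MetricDefs.

Definition continuous_map {X Y : Type} (dX : X -> X -> R) (dY : Y -> Y -> R)
  (f : X -> Y) : Prop :=
  forall x eps, 0 < eps -> exists delta, 0 < delta /\
    forall y, dX x y < delta -> dY (f x) (f y) < eps.

Fixpoint iter {X : Type} (n : nat) (f : X -> X) (x : X) : X :=
  match n with O => x | S k => f (iter k f x) end.

Definition orbit {X : Type} (f : X -> X) (x : X) (y : X) : Prop :=
  exists n : nat, y = iter n f x.

Definition minimal {X : Type} (d : X -> X -> R) (f : X -> X) : Prop :=
  forall x y, closure X d (orbit f x) y.

Definition image {X : Type} (g : X -> X) (U : X -> Prop) (y : X) : Prop :=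
  exists x, U x /\ y = g x.

Definition sensitive {X : Type} (d : X -> X -> R) (f : X -> X) : Prop :=
  exists delta, 0 < delta /\
    forall U : X -> Prop, open_set X d U -> (exists u, U u) ->
      exists n : nat, (n > 0)%nat /\
        exists D, is_diam X d (image (iter n f) U) D /\ D > delta.

Definition pseudo_orbit {X : Type} (d : X -> X -> R) (f : X -> X)
  (delta : R) (xs : nat -> X) : Prop :=
  forall n, d (f (xs n)) (xs (S n)) <= delta.

Definition shadowing {X : Type} (d : X -> X -> R) (f : X -> X) : Prop :=
  forall eps, 0 < eps -> exists delta, 0 < delta /\
    forall xs, pseudo_orbit d f delta xs ->
      exists y, forall n, d (iter n f y) (xs n) < eps.

(** Odometer Delta_alpha: sequences r : nat -> nat with r i < alpha i.
    Indexing starts at 0 (the paper's coordinate i+1 is our coordinate i). *)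
Definition in_Delta (alpha : nat -> nat) (r : nat -> nat) : Prop :=
  forall i, (r i < alpha i)%nat.

Definition kron (a b : nat) : R := if Nat.eqb a b then 0 else 1.

Definition dalpha_partial (r s : nat -> nat) (n : nat) : R :=
  sum_f_R0 (fun i => kron (r i) (s i) / 2 ^ (S i)) n.

(** d_alpha(r,s) = the (always existing) limit of the series *)
Definition dalpha (r s : nat -> nat) : R :=
  epsilon (inhabits 0) (fun l => Un_cv (dalpha_partial r s) l).

(** carry into coordinate i when adding (1,0,0,...) *)
Fixpoint carry (alpha : nat -> nat) (r : nat -> nat) (i : nat) : bool :=
  match i with
  | O => true
  | S j => andb (carry alpha r j) (Nat.eqb (r j) (alpha j - 1))
  end.

Definition g_alpha (alpha : nat -> nat) (r : nat -> nat) : nat -> nat :=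
  fun i => if carry alpha r i then Nat.modulo (r i + 1) (alpha i) else r i.

(* Fix a base point x0. For delta > 0, the lengths of delta-chains from x0 back to x0 generate a
   subgroup g_delta Z of Z, and the length mod g_delta of any delta-chain from x0 to y is well
   defined; by minimality this gives a locally constant equivariant map X -> Z/g_delta. Shadowing
   turns a delta-chain loop into a nearly periodic orbit, so d(f^g_delta z, z) is small for small
   delta; if the g_delta stayed bounded, f would be periodic, which sensitivity forbids. Hence the
   g_delta (which decrease in divisibility as delta grows) admit a tower 1 | N_1 | N_2 | ... with
   prime quotients, and the compatible maps X -> Z/N_k assemble into the odometer factor. The
   orbit of x0 is dense and maps injectively, because x0 has phase n mod N_k after n steps. *)

From Stdlib Require Import Reals Znumtheory ZArith Lia Lra Arith.
From Stdlib Require Import ClassicalEpsilon Classical FunctionalExtensionality.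
Open Scope R_scope.

Lemma mod_add_cancel_r (a b k g : nat) : g <> 0%nat ->
  ((a + k) mod g = (b + k) mod g -> a mod g = b mod g)%nat.
Proof.
  intros Hg E.
  assert (Hshift : forall c, (c mod g = ((c + k) mod g + k * (g - 1)) mod g)%nat).
  { intros c. rewrite Nat.Div0.add_mod_idemp_l, <- (Nat.Div0.mod_add c k g).
    f_equal. nia. }
  rewrite (Hshift a), (Hshift b), E. reflexivity.
Qed.

Lemma mod_mod_divide (a m k : nat) : Nat.divide k m -> ((a mod m) mod k = a mod k)%nat.
Proof.
  intros Hkm. apply Nat2Z.inj. rewrite !Nat2Z.inj_mod.
  apply Z.mod_mod_divide. destruct Hkm as [t ->]. exists (Z.of_nat t). lia.
Qed.

Lemma divide_fact g M : (1 <= g <= M)%nat -> Nat.divide g (fact M).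
Proof.
  induction M as [|M IH]; intros Hg; [lia|].
  destruct (Nat.eq_dec g (S M)) as [->|Hne].
  - apply Nat.divide_factor_l.
  - apply Nat.divide_mul_r, IH. lia.
Qed.

Lemma prime_divisor_exists q : (2 <= q)%nat -> exists p, prime (Z.of_nat p) /\ Nat.divide p q.
Proof.
  induction q as [q IH] using lt_wf_ind. intros Hq.
  destruct (classic (prime (Z.of_nat q))) as [Hp|Hnp].
  - exists q. split; [exact Hp | apply Nat.divide_refl].
  - destruct (not_prime_divide (Z.of_nat q) ltac:(lia) Hnp) as [n [Hn [t Ht]]].
    destruct (IH (Z.to_nat n) ltac:(lia) ltac:(lia)) as [p [Hp [u Hu]]].
    exists p. split; [exact Hp|]. exists (u * Z.to_nat t)%nat. nia.
Qed.

(** * The odometer metric *)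

Lemma inv_pow2_pos n : 0 < / 2 ^ n.
Proof. apply Rinv_0_lt_compat, pow_lt. lra. Qed.

Lemma inv_pow2_S n : / 2 ^ S n = / 2 * / 2 ^ n.
Proof. simpl. apply Rinv_mult. Qed.

Lemma dalpha_term_bounds (r s : nat -> nat) i :
  0 <= kron (r i) (s i) / 2 ^ S i <= / 2 ^ S i.
Proof.
  pose proof (inv_pow2_pos (S i)). unfold kron, Rdiv. destruct (Nat.eqb (r i) (s i)); lra.
Qed.

Lemma dalpha_partial_S (r s : nat -> nat) n :
  dalpha_partial r s (S n) = dalpha_partial r s n + kron (r (S n)) (s (S n)) / 2 ^ S (S n).
Proof. reflexivity. Qed.

Lemma dalpha_partial_le_of_agree (r s : nat -> nat) K :
  (forall j, (j < K)%nat -> r j = s j) -> forall n, dalpha_partial r s n <= / 2 ^ K.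
Proof.
  intros Hagree.
  assert (Hzero : forall i, (i < K)%nat -> kron (r i) (s i) / 2 ^ S i = 0).
  { intros i Hi. rewrite (Hagree i Hi). unfold kron. rewrite Nat.eqb_refl. lra. }
  (* Before index [K] the partial sums vanish; from then on they stay below the geometric tail. *)
  assert (Htail : forall n, dalpha_partial r s n + / 2 ^ S n <= / 2 ^ Nat.min K (S n)).
  { induction n as [|n IH].
    - unfold dalpha_partial. simpl sum_f_R0. destruct K as [|K].
      + pose proof (dalpha_term_bounds r s 0). simpl in *. lra.
      + rewrite Hzero, Nat.min_r by lia. lra.
    - rewrite dalpha_partial_S. pose proof (dalpha_term_bounds r s (S n)) as Hterm.
      rewrite (inv_pow2_S (S n)) in *.
      destruct (Nat.lt_ge_cases (S n) K) as [HK|HK].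
      + rewrite Hzero in * by exact HK. rewrite Nat.min_r in * by lia.
        rewrite (inv_pow2_S (S n)). pose proof (inv_pow2_pos (S n)). lra.
      + rewrite Nat.min_l in * by lia. lra. }
  intros n. pose proof (Htail n). pose proof (inv_pow2_pos (S n)). pose proof (inv_pow2_pos K).
  destruct (Nat.le_ge_cases K (S n)) as [Hle|Hle].
  - rewrite Nat.min_l in * by exact Hle. lra.
  - rewrite Nat.min_r in * by exact Hle. lra.
Qed.

Lemma dalpha_le_of_agree (r s : nat -> nat) K :
  (forall j, (j < K)%nat -> r j = s j) -> dalpha r s <= / 2 ^ K.
Proof.
  intros Hagree.
  assert (Hcv : exists l, Un_cv (dalpha_partial r s) l).
  { destruct (growing_cv (dalpha_partial r s)) as [l Hl]; [| |exists l; exact Hl].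
    - intros n. rewrite dalpha_partial_S. pose proof (dalpha_term_bounds r s (S n)). lra.
    - exists (/ 2 ^ 0). intros x [n ->]. apply dalpha_partial_le_of_agree. intros; lia. }
  apply (Rle_cv_lim (Vn := fun _ => / 2 ^ K) (dalpha_partial_le_of_agree r s K Hagree)
           (epsilon_spec (inhabits 0) _ Hcv)).
  intros e He. exists 0%nat. intros. unfold Rdist. rewrite Rminus_diag, Rabs_R0. exact He.
Qed.

Lemma exists_inv_pow2_lt eps : 0 < eps -> exists K, / 2 ^ K < eps.
Proof.
  intros Heps. destruct (pow_lt_1_zero (/ 2)) with (y := eps) as [K HK]; [|exact Heps|].
  - rewrite Rabs_pos_eq; lra.
  - exists K. specialize (HK K (le_n K)). rewrite pow_inv, Rabs_pos_eq in HK; [exact HK|].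
    left. apply inv_pow2_pos.
Qed.

(** * Mixed-radix digits *)

(* A point of Delta_alpha is a compatible sequence of residues I k mod N k, where
   N k = alpha 0 * ... * alpha (k - 1); [digits] reads off its coordinates, and the adding
   machine becomes I k |-> I k + 1 mod N k. *)
Section MixedRadix.

Variables alpha N : nat -> nat.
Hypothesis alpha_pos : forall i, (0 < alpha i)%nat.
Hypothesis radix_0 : N 0 = 1%nat.
Hypothesis radix_S : forall i, N (S i) = (N i * alpha i)%nat.

Record compatible_residues (I : nat -> nat) : Prop := {
  residue_lt : forall k, (I k < N k)%nat;
  residue_mod : forall j k, (j <= k)%nat -> (I k mod N j = I j)%nat }.

Definition digits (I : nat -> nat) (i : nat) : nat := (I (S i) / N i)%nat.

Lemma radix_pos k : (0 < N k)%nat.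
Proof. induction k; [rewrite radix_0 | rewrite radix_S; specialize (alpha_pos k)]; lia. Qed.

Lemma radix_divide j k : (j <= k)%nat -> Nat.divide (N j) (N k).
Proof.
  induction 1 as [|k _ IH]; [apply Nat.divide_refl|]. rewrite radix_S. apply Nat.divide_mul_l, IH.
Qed.

Lemma residue_S I (HI : compatible_residues I) i : I (S i) = (N i * digits I i + I i)%nat.
Proof.
  unfold digits. rewrite <- (residue_mod _ HI i (S i)) by lia. apply Nat.div_mod_eq.
Qed.

Lemma digits_lt I (HI : compatible_residues I) i : (digits I i < alpha i)%nat.
Proof.
  apply Nat.Div0.div_lt_upper_bound. rewrite <- radix_S. apply (residue_lt _ HI).
Qed.

Lemma carry_digits I (HI : compatible_residues I) i :
  carry alpha (digits I) i = (I i =? N i - 1)%nat.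
Proof.
  induction i as [|i IH]; simpl carry.
  - pose proof (residue_lt _ HI 0). rewrite radix_0 in *. symmetry. apply Nat.eqb_eq. lia.
  - rewrite IH, (residue_S I HI), radix_S.
    pose proof (residue_lt _ HI i). pose proof (digits_lt I HI i). pose proof (alpha_pos i).
    destruct (Nat.eqb_spec (I i) (N i - 1)); destruct (Nat.eqb_spec (digits I i) (alpha i - 1));
      symmetry; simpl; apply Nat.eqb_eq || apply Nat.eqb_neq; nia.
Qed.

Lemma g_alpha_digits I (HI : compatible_residues I) :
  g_alpha alpha (digits I) = digits (fun k => (I k + 1) mod N k)%nat.
Proof.
  apply functional_extensionality. intros i. unfold g_alpha. rewrite (carry_digits I HI).
  pose proof (residue_lt _ HI i) as Hi. pose proof (digits_lt I HI i) as Hq.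
  pose proof (radix_pos i).
  unfold digits at 3. rewrite (residue_S I HI), radix_S.
  set (q := digits I i) in *. set (r := I i) in *.
  destruct (Nat.eqb_spec r (N i - 1)) as [Hr|Hr].
  - replace (N i * q + r + 1)%nat with ((q + 1) * N i)%nat by nia.
    destruct (Nat.eq_dec (q + 1) (alpha i)) as [Hq1|Hq1].
    + rewrite Hq1, Nat.mul_comm, !Nat.Div0.mod_same, Nat.Div0.div_0_l. reflexivity.
    + rewrite !Nat.mod_small by nia. rewrite Nat.div_mul by lia. reflexivity.
  - rewrite Nat.mod_small by nia.
    replace (N i * q + r + 1)%nat with (r + 1 + q * N i)%nat by lia.
    rewrite Nat.div_add by lia. rewrite Nat.div_small by lia. reflexivity.
Qed.

Lemma digits_agree_below I I' K : compatible_residues I -> compatible_residues I' ->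
  I K = I' K -> forall i, (i < K)%nat -> digits I i = digits I' i.
Proof.
  intros HI HI' HK i Hi. unfold digits.
  rewrite <- (residue_mod _ HI (S i) K), <- (residue_mod _ HI' (S i) K), HK by exact Hi.
  reflexivity.
Qed.

Lemma digits_inj I I' : compatible_residues I -> compatible_residues I' ->
  digits I = digits I' -> forall k, I k = I' k.
Proof.
  intros HI HI' E k. induction k as [|k IH].
  - pose proof (residue_lt _ HI 0). pose proof (residue_lt _ HI' 0). rewrite radix_0 in *. lia.
  - rewrite (residue_S I HI), (residue_S I' HI'), IH, E. reflexivity.
Qed.

End MixedRadix.

(** * Chains, shadowing and periodicity *)

Lemma iter_add {X : Type} (f : X -> X) a b x : iter (a + b) f x = iter a f (iter b f x).
Proof. induction a as [|a IH]; simpl; congruence. Qed.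

Lemma iter_succ_r {X : Type} (f : X -> X) n x : iter n f (f x) = iter (S n) f x.
Proof. induction n as [|n IH]; simpl; [|rewrite IH]; reflexivity. Qed.

Lemma iter_comm {X : Type} (f : X -> X) a b x : iter a f (iter b f x) = iter b f (iter a f x).
Proof. rewrite <- !iter_add, Nat.add_comm. reflexivity. Qed.

Section Dynamics.

Variables (X : Type) (d : X -> X -> R) (f : X -> X).
Hypothesis Hmet : is_metric X d.
Hypothesis Hcont : continuous_map d d f.

Let d_nonneg x y : 0 <= d x y. Proof. apply Hmet. Qed.
Let d_refl x : d x x = 0. Proof. apply Hmet. reflexivity. Qed.
Let d_sym x y : d x y = d y x. Proof. apply Hmet. Qed.
Let d_triangle x y z : d x z <= d x y + d y z. Proof. apply Hmet. Qed.

Lemma iter_continuous n : continuous_map d d (iter n f).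
Proof.
  induction n as [|n IH]; intros x e He.
  - exists e. split; [exact He|]. intros y Hy. exact Hy.
  - destruct (Hcont (iter n f x) e He) as [r [Hr Hf]].
    destruct (IH x r Hr) as [s [Hs Hn]].
    exists s. split; [exact Hs|]. intros y Hy. apply Hf, Hn, Hy.
Qed.

Lemma iter_equicontinuous x N e : 0 < e -> exists r, 0 < r /\
  forall k y, (k < N)%nat -> d x y < r -> d (iter k f x) (iter k f y) < e.
Proof.
  intros He. induction N as [|N [r [Hr IH]]].
  - exists 1. split; [lra|]. intros; lia.
  - destruct (iter_continuous N x e He) as [s [Hs HN]].
    exists (Rmin r s). split; [apply Rmin_pos; assumption|].
    intros k y Hk Hy. pose proof (Rmin_l r s). pose proof (Rmin_r r s).
    destruct (Nat.eq_dec k N) as [->|Hne]; [apply HN | apply IH]; lra || lia.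
Qed.

Lemma iter_mod_period N : (forall z, iter N f z = z) ->
  forall n z, iter n f z = iter (n mod N) f z.
Proof.
  intros HN n z.
  assert (Hmul : forall q w, iter (q * N) f w = w).
  { induction q as [|q IH]; intros w; [reflexivity|]. simpl. rewrite iter_add, IH. apply HN. }
  rewrite (Nat.div_mod_eq n N) at 1. rewrite iter_add, Nat.mul_comm, Hmul. reflexivity.
Qed.

(* A periodic map is equicontinuous: only the finitely many iterates below the period occur. *)
Lemma periodic_not_sensitive (x : X) N : N <> 0%nat -> (forall z, iter N f z = z) ->
  ~ sensitive d f.
Proof.
  intros HN0 HN [delta [Hdelta Hsens]].
  destruct (iter_equicontinuous x N (delta / 2) ltac:(lra)) as [r [Hr Heq]].
  destruct (Hsens (fun y => d x y < r)) as [n [_ [D [[_ Hlub] HD]]]].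
  - intros y Hy. exists (r - d x y). split; [lra|].
    intros z Hz. pose proof (d_triangle x y z). lra.
  - exists x. rewrite d_refl. exact Hr.
  - enough (D <= delta) by lra.
    apply Hlub. intros v [a [b [[u [Hu ->]] [[w [Hw ->]] ->]]]].
    rewrite !(iter_mod_period N HN n).
    assert (Hk : (n mod N < N)%nat) by (apply Nat.mod_upper_bound, HN0).
    pose proof (Heq _ u Hk Hu) as Hux. pose proof (Heq _ w Hk Hw).
    pose proof (d_triangle (iter (n mod N) f u) (iter (n mod N) f x) (iter (n mod N) f w)).
    rewrite d_sym in Hux. lra.
Qed.

Definition displacement_le (n : nat) (B : R) : Prop := forall z, d (iter n f z) z <= B.

Lemma displacement_le_mul g B t : displacement_le g B -> displacement_le (t * g) (INR t * B).
Proof.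
  intros Hg. induction t as [|t IH]; intros z.
  - simpl. rewrite d_refl. lra.
  - simpl Nat.mul. rewrite iter_add, S_INR.
    pose proof (d_triangle (iter g f (iter (t * g) f z)) (iter (t * g) f z) z).
    pose proof (Hg (iter (t * g) f z)). pose proof (IH z). lra.
Qed.

Section Minimal.

Hypothesis Hmin : minimal d f.

(* By minimality every point is a limit of orbit points, and [iter n f] is continuous. *)
Lemma displacement_le_of_orbit n B y :
  (forall k, d (iter n f (iter k f y)) (iter k f y) <= B) -> displacement_le n B.
Proof.
  intros Horb z. apply Rle_plus_epsilon. intros e He.
  destruct (iter_continuous n z (e / 2) ltac:(lra)) as [r [Hr Hc]].
  destruct (Hmin y z (Rmin r (e / 2)) ltac:(apply Rmin_pos; lra)) as [a [[k ->] Ha]].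
  pose proof (Rmin_l r (e / 2)). pose proof (Rmin_r r (e / 2)).
  rewrite d_sym in Ha.
  assert (d (iter n f z) (iter n f (iter k f y)) < e / 2) by (apply Hc; lra).
  pose proof (Horb k).
  pose proof (d_triangle (iter n f z) (iter n f (iter k f y)) z).
  pose proof (d_triangle (iter n f (iter k f y)) (iter k f y) z).
  rewrite (d_sym (iter k f y) z) in *. lra.
Qed.

Lemma displacement_le_sub (x : X) a b g B1 B2 : a = (g + b)%nat ->
  displacement_le a B1 -> displacement_le b B2 -> displacement_le g (B1 + B2).
Proof.
  intros -> H1 H2. apply (displacement_le_of_orbit _ _ (iter b f x)). intros k.
  rewrite (iter_comm f k b x), <- iter_add. set (w := iter k f x).
  pose proof (H1 w). pose proof (H2 w).
  pose proof (d_triangle (iter (g + b) f w) w (iter b f w)). rewrite (d_sym w) in *. lra.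
Qed.

Definition chain (delta : R) (x y : X) (n : nat) : Prop :=
  exists c : nat -> X, c 0%nat = x /\ c n = y /\
    forall i, (i < n)%nat -> d (f (c i)) (c (S i)) < delta.

Lemma chain_refl delta x : chain delta x x 0.
Proof. exists (fun _ => x). repeat split. intros; lia. Qed.

Lemma chain_step delta x : 0 < delta -> chain delta x (f x) 1.
Proof.
  intros Hdelta. exists (fun i => match i with O => x | _ => f x end).
  repeat split. intros i Hi. replace i with 0%nat by lia. rewrite d_refl. exact Hdelta.
Qed.

Lemma chain_app delta x y z n m :
  chain delta x y n -> chain delta y z m -> chain delta x z (n + m).
Proof.
  intros [c1 [A1 [B1 C1]]] [c2 [A2 [B2 C2]]].
  exists (fun i => if (i <=? n)%nat then c1 i else c2 (i - n)%nat). repeat split.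
  - exact A1.
  - destruct (Nat.leb_spec (n + m) n).
    + replace m with 0%nat in * by lia. rewrite Nat.add_0_r. congruence.
    + replace (n + m - n)%nat with m by lia. exact B2.
  - intros i Hi. destruct (Nat.leb_spec i n), (Nat.leb_spec (S i) n); try lia.
    + apply C1. lia.
    + replace i with n by lia. replace (S n - n)%nat with 1%nat by lia.
      rewrite B1, <- A2. apply C2. lia.
    + replace (S i - n)%nat with (S (i - n)) by lia. apply C2. lia.
Qed.

Lemma chain_mono delta1 delta2 x y n :
  delta1 <= delta2 -> chain delta1 x y n -> chain delta2 x y n.
Proof.
  intros Hle [c [A [B C]]]. exists c. repeat split; [exact A | exact B |].
  intros i Hi. specialize (C i Hi). lra.
Qed.

Lemma chain_exists delta x y : 0 < delta -> exists n, (1 <= n)%nat /\ chain delta x y n.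
Proof.
  intros Hdelta. destruct (Hmin (f x) y delta Hdelta) as [a [[k ->] Ha]].
  exists (S k). split; [lia|].
  exists (fun i => if (i <=? k)%nat then iter i f x else y). repeat split.
  - destruct (Nat.leb_spec (S k) k); [lia | reflexivity].
  - intros i Hi. destruct (Nat.leb_spec i k), (Nat.leb_spec (S i) k); try lia.
    + rewrite d_refl. exact Hdelta.
    + replace i with k by lia. rewrite iter_succ_r in Ha. exact Ha.
Qed.

Lemma chain_open delta x y n : (1 <= n)%nat -> chain delta x y n ->
  exists r, 0 < r /\ forall y', d y y' < r -> chain delta x y' n.
Proof.
  intros Hn [c [A [B C]]]. destruct n as [|m]; [lia|].
  pose proof (C m ltac:(lia)) as Cm. rewrite B in Cm.
  exists (delta - d (f (c m)) y). split; [lra|]. intros y' Hy'.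
  exists (fun i => if (i =? S m)%nat then y' else c i). repeat split.
  - exact A.
  - rewrite Nat.eqb_refl. reflexivity.
  - intros i Hi. destruct (Nat.eqb_spec i (S m)); [lia|].
    destruct (Nat.eqb_spec (S i) (S m)).
    + replace i with m by lia. pose proof (d_triangle (f (c m)) y y'). lra.
    + apply C. lia.
Qed.

Definition shadowing_at (delta eps : R) : Prop :=
  forall xs, pseudo_orbit d f delta xs -> exists y, forall n, d (iter n f y) (xs n) < eps.

(* Shadow the periodic pseudo-orbit that runs around the loop forever. *)
Lemma displacement_le_of_loop delta_s eps delta x n : 0 < eps ->
  shadowing_at delta_s eps -> delta <= delta_s -> chain delta x x n ->
  displacement_le n (2 * eps).
Proof.
  intros Heps Hsh Hle [c [A [B C]]].
  destruct (Nat.eq_dec n 0) as [->|Hn].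
  { intros z. simpl. rewrite d_refl. lra. }
  destruct (Hsh (fun k => c (k mod n)%nat)) as [y Hy].
  { intros k. simpl.
    replace (S k mod n)%nat with ((k mod n + 1) mod n)%nat
      by (rewrite Nat.Div0.add_mod_idemp_l; f_equal; lia).
    pose proof (Nat.mod_upper_bound k n Hn). set (i := (k mod n)%nat) in *.
    apply Rlt_le, Rlt_le_trans with delta; [|exact Hle].
    destruct (Nat.eq_dec (i + 1) n) as [E|E].
    - rewrite E, Nat.Div0.mod_same, A, <- B, <- E, Nat.add_1_r. apply C. lia.
    - rewrite Nat.mod_small, Nat.add_1_r by lia. apply C. lia. }
  apply (displacement_le_of_orbit n (2 * eps) y). intros k.
  rewrite <- iter_add.
  pose proof (Hy (n + k)%nat) as Hnk. pose proof (Hy k) as Hk.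
  replace ((n + k) mod n)%nat with (k mod n)%nat in Hnk
    by (rewrite <- (Nat.Div0.mod_add k 1 n); f_equal; lia).
  pose proof (d_triangle (iter (n + k) f y) (c (k mod n)%nat) (iter k f y)).
  rewrite (d_sym (c _) (iter k f y)) in *. lra.
Qed.

(** * Chain periods and cyclic factors *)

Section BasePoint.

Variable x0 : X.

Definition loop (delta : R) (n : nat) : Prop := chain delta x0 x0 n.

Lemma loop_mul delta q n : loop delta n -> loop delta (q * n).
Proof.
  intros Hn. induction q as [|q IH]; [apply chain_refl|]. eapply chain_app; eassumption.
Qed.

Definition loop_gap (delta : R) (g : nat) : Prop :=
  exists a b, loop delta a /\ loop delta b /\ a = (g + b)%nat.

Definition is_chain_period (delta : R) (g : nat) : Prop :=
  (1 <= g)%nat /\ loop_gap delta g /\ forall m, (1 <= m)%nat -> loop_gap delta m -> (g <= m)%nat.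

(* The loop lengths at [x0] generate the subgroup [g Z] of [Z]. *)
Definition chain_period (delta : R) : nat := epsilon (inhabits 0%nat) (is_chain_period delta).

Lemma chain_period_spec delta : 0 < delta -> is_chain_period delta (chain_period delta).
Proof.
  intros Hdelta. unfold chain_period. apply epsilon_spec.
  destruct (dec_inh_nat_subset_has_unique_least_element
              (fun m => (1 <= m)%nat /\ loop_gap delta m))
    as [g [[[Hg1 Hg2] Hleast] _]].
  - intros m. apply classic.
  - destruct (chain_exists delta x0 x0 Hdelta) as [n [Hn Hloop]].
    exists n. split; [exact Hn|].
    exists n, 0%nat. repeat split; [exact Hloop | apply chain_refl | lia].
  - exists g. repeat split; [exact Hg1 | exact Hg2 |].
    intros m Hm1 Hm2. apply Hleast. split; assumption.
Qed.

Lemma chain_period_pos delta : 0 < delta -> chain_period delta <> 0%nat.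
Proof. intros Hdelta. destruct (chain_period_spec delta Hdelta). lia. Qed.

Lemma loop_mod_chain_period delta a b : 0 < delta -> loop delta a -> loop delta b ->
  (a mod chain_period delta = b mod chain_period delta)%nat.
Proof.
  intros Hdelta. revert a b.
  assert (Hle : forall a b, (b <= a)%nat -> loop delta a -> loop delta b ->
                  (a mod chain_period delta = b mod chain_period delta)%nat).
  { intros a b Hba Ha Hb.
    destruct (chain_period_spec delta Hdelta) as [Hg1 [[a' [b' [Ha' [Hb' Hgap]]]] Hleast]].
    set (g := chain_period delta) in *.
    set (q := ((a - b) / g)%nat). set (r := ((a - b) mod g)%nat).
    pose proof (Nat.div_mod_eq (a - b) g) as Hdiv. fold q r in Hdiv.
    pose proof (Nat.mod_upper_bound (a - b) g ltac:(lia)) as Hr. fold r in Hr.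
    (* [r] is again a loop gap, so it vanishes by minimality of [g]. *)
    assert (Hr0 : r = 0%nat).
    { destruct (Nat.eq_dec r 0) as [|Hr0]; [assumption|].
      enough (g <= r)%nat by lia. apply Hleast; [lia|].
      exists (a + q * b')%nat, (b + q * a')%nat. repeat split.
      - eapply chain_app; [exact Ha | apply loop_mul, Hb'].
      - eapply chain_app; [exact Hb | apply loop_mul, Ha'].
      - nia. }
    replace a with (b + q * g)%nat by nia. apply Nat.Div0.mod_add. }
  intros a b Ha Hb. destruct (Nat.le_ge_cases b a).
  - apply Hle; assumption.
  - symmetry. apply Hle; assumption.
Qed.

Lemma chain_period_divide delta1 delta2 : 0 < delta1 -> delta1 <= delta2 ->
  Nat.divide (chain_period delta2) (chain_period delta1).
Proof.
  intros H1 H12.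
  destruct (chain_period_spec delta1 H1) as [_ [[a [b [Ha [Hb Hgap]]]] _]].
  apply Nat.Lcm0.mod_divide.
  rewrite <- (Nat.Div0.mod_0_l (chain_period delta2)).
  apply (mod_add_cancel_r _ _ b); [apply chain_period_pos; lra|].
  rewrite <- Hgap. apply loop_mod_chain_period; [lra | |]; eapply chain_mono; eauto.
Qed.

Lemma displacement_le_chain_period delta_s eps delta : 0 < eps -> shadowing_at delta_s eps ->
  0 < delta -> delta <= delta_s -> displacement_le (chain_period delta) (4 * eps).
Proof.
  intros Heps Hsh Hdelta Hle.
  destruct (chain_period_spec delta Hdelta) as [_ [[a [b [Ha [Hb Hgap]]]] _]].
  replace (4 * eps) with (2 * eps + 2 * eps) by ring.
  apply (displacement_le_sub x0 a b); [exact Hgap | |];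
    eapply displacement_le_of_loop; eassumption.
Qed.

Record cyclic_factor (m : nat) (J : X -> nat) : Prop := {
  cyclic_factor_lt : forall x, (J x < m)%nat;
  cyclic_factor_base : J x0 = 0%nat;
  cyclic_factor_step : forall x, J (f x) = ((J x + 1) mod m)%nat;
  cyclic_factor_locally_constant :
    forall x, exists r, 0 < r /\ forall y, d x y < r -> J y = J x }.

Lemma cyclic_factor_orbit m J : cyclic_factor m J ->
  forall n, J (iter n f x0) = (n mod m)%nat.
Proof.
  intros HJ n. induction n as [|n IH].
  - change (iter 0 f x0) with x0. rewrite (cyclic_factor_base _ _ HJ).
    symmetry. apply Nat.Div0.mod_0_l.
  - simpl. rewrite (cyclic_factor_step _ _ HJ), IH, Nat.Div0.add_mod_idemp_l, Nat.add_1_r.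
    reflexivity.
Qed.

Lemma cyclic_factor_unique m J J' : cyclic_factor m J -> cyclic_factor m J' ->
  forall y, J y = J' y.
Proof.
  intros HJ HJ' y.
  destruct (cyclic_factor_locally_constant _ _ HJ y) as [r [Hr Hy]].
  destruct (cyclic_factor_locally_constant _ _ HJ' y) as [r' [Hr' Hy']].
  destruct (Hmin x0 y (Rmin r r') ltac:(apply Rmin_pos; assumption)) as [a [[n ->] Ha]].
  rewrite d_sym in Ha. pose proof (Rmin_l r r'). pose proof (Rmin_r r r').
  rewrite <- (Hy (iter n f x0)), <- (Hy' (iter n f x0)) by lra.
  rewrite (cyclic_factor_orbit _ _ HJ), (cyclic_factor_orbit _ _ HJ'). reflexivity.
Qed.

Lemma cyclic_factor_mod m J k : cyclic_factor m J -> k <> 0%nat -> Nat.divide k m ->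
  cyclic_factor k (fun x => J x mod k)%nat.
Proof.
  intros HJ Hk Hkm. split.
  - intros x. apply Nat.mod_upper_bound, Hk.
  - rewrite (cyclic_factor_base _ _ HJ). apply Nat.Div0.mod_0_l.
  - intros x.
    rewrite (cyclic_factor_step _ _ HJ), mod_mod_divide, Nat.Div0.add_mod_idemp_l by exact Hkm.
    reflexivity.
  - intros x. destruct (cyclic_factor_locally_constant _ _ HJ x) as [r [Hr Hloc]].
    exists r. split; [exact Hr|]. intros y Hy. rewrite Hloc by exact Hy. reflexivity.
Qed.

Definition chain_length (delta : R) (y : X) : nat := epsilon (inhabits 0%nat) (chain delta x0 y).

Lemma chain_length_spec delta y : 0 < delta -> chain delta x0 y (chain_length delta y).
Proof.
  intros Hdelta. unfold chain_length. apply epsilon_spec.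
  destruct (chain_exists delta x0 y Hdelta) as [n [_ Hn]]. exists n. exact Hn.
Qed.

Lemma chain_length_mod delta y n : 0 < delta -> chain delta x0 y n ->
  (n mod chain_period delta = chain_length delta y mod chain_period delta)%nat.
Proof.
  intros Hdelta Hn. destruct (chain_exists delta y x0 Hdelta) as [k [_ Hk]].
  apply (mod_add_cancel_r _ _ k); [apply chain_period_pos, Hdelta|].
  apply loop_mod_chain_period; [exact Hdelta | |]; eapply chain_app; try eassumption.
  apply chain_length_spec, Hdelta.
Qed.

Definition phase (delta : R) (y : X) : nat := (chain_length delta y mod chain_period delta)%nat.

Lemma phase_cyclic_factor delta : 0 < delta -> cyclic_factor (chain_period delta) (phase delta).
Proof.
  intros Hdelta. pose proof (chain_period_pos delta Hdelta) as Hg. unfold phase. split.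
  - intros x. apply Nat.mod_upper_bound, Hg.
  - rewrite <- (chain_length_mod delta x0 0) by (exact Hdelta || apply chain_refl).
    apply Nat.Div0.mod_0_l.
  - intros x.
    rewrite <- (chain_length_mod delta (f x) (chain_length delta x + 1)), Nat.Div0.add_mod_idemp_l.
    + reflexivity.
    + exact Hdelta.
    + eapply chain_app; [apply chain_length_spec | apply chain_step]; exact Hdelta.
  - intros x. destruct (chain_exists delta x0 x Hdelta) as [n [Hn Hx]].
    destruct (chain_open delta x0 x n Hn Hx) as [r [Hr Hnear]].
    exists r. split; [exact Hr|]. intros y Hy.
    rewrite <- (chain_length_mod delta y n), <- (chain_length_mod delta x n); auto.
Qed.

(** * The odometer factor *)

Section Tower.

Hypothesis Hshad : shadowing d f.
Hypothesis Hsens : sensitive d f.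

(* If the chain periods stayed below [M], shadowing would make [iter (fact M) f] the identity. *)
Lemma chain_period_unbounded delta M : 0 < delta ->
  exists delta', 0 < delta' /\ delta' <= delta /\ (M < chain_period delta')%nat.
Proof.
  intros Hdelta. apply NNPP. intros Hbounded.
  apply (periodic_not_sensitive x0 (fact M)); [apply fact_neq_0 | | exact Hsens].
  intros z. apply Hmet, Rle_antisym; [|apply d_nonneg].
  apply Rle_plus_epsilon. intros e He. rewrite Rplus_0_l.
  pose proof (lt_0_INR _ (lt_O_fact M)) as HM.
  set (eps := e / (4 * INR (fact M))).
  assert (Heps : 0 < eps) by (apply Rdiv_lt_0_compat; lra).
  destruct (Hshad eps Heps) as [delta_s [Hdelta_s Hsh]].
  set (delta' := Rmin delta delta_s).
  assert (Hdelta' : 0 < delta') by (apply Rmin_pos; assumption).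
  pose proof (Rmin_l delta delta_s). pose proof (Rmin_r delta delta_s).
  assert (Hg : (chain_period delta' <= M)%nat).
  { apply Nat.nlt_ge. intros Hlt. apply Hbounded. exists delta'. repeat split; assumption. }
  pose proof (chain_period_pos delta' Hdelta').
  destruct (divide_fact (chain_period delta') M ltac:(lia)) as [t Ht].
  pose proof (displacement_le_mul _ _ t
    (displacement_le_chain_period delta_s eps delta' Heps Hsh Hdelta' ltac:(assumption)) z) as Hz.
  rewrite <- Ht in Hz.
  assert (Ht_le : INR t <= INR (fact M)) by (apply le_INR; rewrite Ht; nia).
  apply (Rle_trans _ _ _ Hz).
  replace e with (INR (fact M) * (4 * eps)) by (unfold eps; field; lra).
  apply Rmult_le_compat_r; lra.
Qed.

Definition admissible (N : nat) : Prop :=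
  exists delta, 0 < delta /\ Nat.divide N (chain_period delta).

Lemma admissible_1 : admissible 1.
Proof. exists 1. split; [lra | apply Nat.divide_1_l]. Qed.

Lemma admissible_extend N : admissible N ->
  exists p, prime (Z.of_nat p) /\ admissible (N * p).
Proof.
  intros [delta [Hdelta [q Hq]]].
  destruct (chain_period_unbounded delta (chain_period delta) Hdelta) as [delta' [H1 [H2 H3]]].
  pose proof (chain_period_pos delta Hdelta).
  destruct (chain_period_divide delta' delta H1 H2) as [t Ht].
  assert (Ht2 : (2 <= t)%nat) by nia.
  assert (Hq1 : (1 <= q)%nat) by nia.
  destruct (prime_divisor_exists (t * q)) as [p [Hp [u Hu]]]; [nia|].
  exists p. split; [exact Hp|]. exists delta'. split; [exact H1|].
  exists u. rewrite Ht, Hq. nia.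
Qed.

Lemma admissible_cyclic_factor N : admissible N -> exists J, cyclic_factor N J.
Proof.
  intros [delta [Hdelta HN]]. exists (fun x => phase delta x mod N)%nat.
  pose proof (chain_period_pos delta Hdelta).
  apply (cyclic_factor_mod (chain_period delta)); [apply phase_cyclic_factor, Hdelta | | exact HN].
  intros ->. destruct HN. lia.
Qed.

(* Choosing the next prime by [epsilon] lets the tower 1 | N_1 | N_2 | ... of admissible periods
   be defined by plain recursion. *)
Definition next_prime (N : nat) : nat :=
  epsilon (inhabits 0%nat) (fun p => prime (Z.of_nat p) /\ admissible (N * p)).

Fixpoint tower_period (k : nat) : nat :=
  match k with
  | O => 1
  | S k => tower_period k * next_prime (tower_period k)
  end.

Definition tower_prime (k : nat) : nat := next_prime (tower_period k).

Lemma next_prime_spec N : admissible N ->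
  prime (Z.of_nat (next_prime N)) /\ admissible (N * next_prime N).
Proof. intros HN. unfold next_prime. apply epsilon_spec, admissible_extend, HN. Qed.

Lemma admissible_tower_period k : admissible (tower_period k).
Proof.
  induction k as [|k IH]; [exact admissible_1|]. exact (proj2 (next_prime_spec _ IH)).
Qed.

Lemma tower_prime_prime k : prime (Z.of_nat (tower_prime k)).
Proof. exact (proj1 (next_prime_spec _ (admissible_tower_period k))). Qed.

Lemma tower_prime_pos k : (0 < tower_prime k)%nat.
Proof. pose proof (prime_ge_2 _ (tower_prime_prime k)). lia. Qed.

Lemma tower_period_gt k : (k < tower_period k)%nat.
Proof.
  induction k as [|k IH]; [simpl; lia|]. simpl. fold (tower_prime k).
  pose proof (prime_ge_2 _ (tower_prime_prime k)). nia.
Qed.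

Definition tower_phase (k : nat) : X -> nat :=
  epsilon (inhabits (fun _ => 0%nat)) (cyclic_factor (tower_period k)).

Lemma tower_phase_cyclic_factor k : cyclic_factor (tower_period k) (tower_phase k).
Proof.
  unfold tower_phase. apply epsilon_spec, admissible_cyclic_factor, admissible_tower_period.
Qed.

Lemma tower_phase_compatible x :
  compatible_residues tower_period (fun k => tower_phase k x).
Proof.
  split.
  - intros k. apply (cyclic_factor_lt _ _ (tower_phase_cyclic_factor k)).
  - intros j k Hjk.
    apply (cyclic_factor_unique (tower_period j) (fun y => tower_phase k y mod tower_period j)%nat);
      [|apply tower_phase_cyclic_factor].
    apply (cyclic_factor_mod (tower_period k)); [apply tower_phase_cyclic_factor | | ].
    + pose proof (tower_period_gt j). lia.
    + apply (radix_divide tower_prime); reflexivity || assumption.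
Qed.

Definition odometer_factor (x : X) : nat -> nat := digits tower_period (fun k => tower_phase k x).

Lemma odometer_factor_in_Delta x : in_Delta tower_prime (odometer_factor x).
Proof.
  intros i. apply (digits_lt tower_prime tower_period (fun _ => eq_refl)), tower_phase_compatible.
Qed.

Lemma odometer_factor_equivariant x :
  g_alpha tower_prime (odometer_factor x) = odometer_factor (f x).
Proof.
  unfold odometer_factor.
  rewrite (g_alpha_digits tower_prime tower_period tower_prime_pos eq_refl (fun _ => eq_refl));
    [|apply tower_phase_compatible].
  f_equal. apply functional_extensionality. intros k.
  symmetry. apply (cyclic_factor_step _ _ (tower_phase_cyclic_factor k)).
Qed.

Lemma odometer_factor_continuous : continuous_map d dalpha odometer_factor.
Proof.
  intros x eps Heps. destruct (exists_inv_pow2_lt eps Heps) as [K HK].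
  destruct (cyclic_factor_locally_constant _ _ (tower_phase_cyclic_factor K) x) as [r [Hr Hloc]].
  exists r. split; [exact Hr|]. intros y Hy.
  apply Rle_lt_trans with (/ 2 ^ K); [|exact HK].
  apply dalpha_le_of_agree. apply (digits_agree_below tower_period _ _ K);
    [apply tower_phase_compatible .. | symmetry; apply Hloc, Hy].
Qed.

Lemma odometer_factor_inj_orbit x y : orbit f x0 x -> orbit f x0 y ->
  odometer_factor x = odometer_factor y -> x = y.
Proof.
  intros [a ->] [b ->] E.
  pose proof (digits_inj tower_period eq_refl _ _
    (tower_phase_compatible _) (tower_phase_compatible _) E (a + b)) as Hab.
  cbv beta in Hab. rewrite !(cyclic_factor_orbit _ _ (tower_phase_cyclic_factor (a + b))) in Hab.
  pose proof (tower_period_gt (a + b)).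
  rewrite !Nat.mod_small in Hab by lia. subst. reflexivity.
Qed.

End Tower.

End BasePoint.

End Minimal.

End Dynamics.

Theorem theorem4p11 (X : Type) (d : X -> X -> R) (f : X -> X)
  (Hmet : is_metric X d) (Hcpt : compact_space X d)
  (Hcont : continuous_map d d f)
  (Hsens : sensitive d f) (Hmin : minimal d f) (Hshad : shadowing d f) :
  exists alpha : nat -> nat,
    (forall i, prime (Z.of_nat (alpha i))) /\
    exists pi : X -> (nat -> nat),
      (forall x, in_Delta alpha (pi x)) /\
      continuous_map d dalpha pi /\
      (forall x, g_alpha alpha (pi x) = pi (f x)) /\
      exists D : X -> Prop, dense X d D /\
        (forall x y, D x -> D y -> pi x = pi y -> x = y).
Proof.
  destruct (classic (inhabited X)) as [[x0]|Hempty].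
  - exists (tower_prime X d f x0). split; [eapply tower_prime_prime; eauto|].
    exists (odometer_factor X d f x0). split; [|split; [|split]].
    + eapply odometer_factor_in_Delta; eauto.
    + eapply odometer_factor_continuous; eauto.
    + eapply odometer_factor_equivariant; eauto.
    + exists (orbit f x0). split; [exact (Hmin x0) | eapply odometer_factor_inj_orbit; eauto].
  - assert (Hnone : forall x : X, False) by (intros x; exact (Hempty (inhabits x))).
    exists (fun _ => 2%nat). split; [intros; exact prime_2|].
    exists (fun _ _ => 0%nat). repeat split; try (intros x; destruct (Hnone x)).
    exists (fun _ => False). split; intros x; destruct (Hnone x).
Qed.
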